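(* Let $P$ be a finite poset, $\phi\in\mathrm{Hom}(P,\mathbb{N})$, $m=\overline{\Lambda}\phi$ and $b\in P$. Then the longest $b$-chain in $m$ has length $\phi(b)$.
   Context: $\mathbb{N}=\{0,1,\dots\}$; $\mathrm{Hom}(P,\mathbb{N})$ is the set of isotone maps $P\to\mathbb{N}$. The ascent is $\Lambda\phi=\{(p,i)\in P\times\mathbb{N}:\phi(q)\le i<\phi(p)\ \forall q<p\}$ and $\overline{\Lambda}\phi=\prod_{(p,i)\in\Lambda\phi}x_p\in k[x_P]$. For $b\in P$, a $b$-chain is a multichain $p_1\le p_2\le\dots\le p_r$ in $P$ with $p_r\le b$; its length is $r$; it is in a monomial $m$ if $\prod_{i=1}^r x_{p_i}$ divides $m$. *)

From mathcomp Require Import all_boot all_order.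
Set Implicit Arguments. Unset Strict Implicit. Unset Printing Implicit Defensive.
Import Order.Theory.
Local Open Scope order_scope.

(* Monomials of k[x_P] are represented by their exponent vectors P -> nat;
   the monomial m1 divides m2 iff its exponents are pointwise <=. *)
Definition monomial (T : Type) := T -> nat.
Definition mdivides (T : Type) (m1 m2 : monomial T) : Prop :=
  forall p, (m1 p <= m2 p)%N.

Definition isotone d (P : porderType d) (phi : P -> nat) : Prop :=
  forall x y : P, x <= y -> (phi x <= phi y)%N.

Definition ascent d (P : finPOrderType d) (phi : P -> nat) (pi : P * nat) : bool :=
  [forall q : P, (q < pi.1) ==> (phi q <= pi.2)%N] && (pi.2 < phi pi.1)%N.

(* \overline{Lambda} phi = prod_{(p,i) in Lambda phi} x_p : the exponent of x_p
   is the number of i with (p,i) in Lambda phi (all such i lie in [0, phi p)). *)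
Definition ascent_mono d (P : finPOrderType d) (phi : P -> nat) : monomial P :=
  fun p => count (fun i => ascent phi (p, i)) (iota 0 (phi p)).

(* A b-chain is a multichain p_1 <= ... <= p_r with p_r <= b (r may be 0). *)
Definition bchain d (P : porderType d) (b : P) (s : seq P) : Prop :=
  sorted (fun x y : P => x <= y) s /\ last b s <= b.

Definition chain_mono (P : eqType) (s : seq P) : monomial P :=
  fun p => count_mem p s.

Definition chain_in (P : eqType) (s : seq P) (m : monomial P) : Prop :=
  mdivides (chain_mono s) m.

(* The exponent of x_c in m is phi c - M c, where M c is the largest value of
   phi strictly below c: indeed (c, i) is an ascent iff M c <= i < phi c.
   Hence a chain in m whose top element is c contains at most phi c - M c
   copies of c, and the remaining elements form a chain topped by some
   c' < c, of length at most phi c' <= M c by induction.  Conversely, a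
   chain of length phi q for a q < c attaining M c, followed by phi c - M c
   copies of c, is a c-chain in m of length phi c. *)
From mathcomp Require Import all_boot all_order.
From mathcomp Require Import zify.
Set Implicit Arguments. Unset Strict Implicit.
Local Open Scope order_scope.
Import Order.Theory.

Lemma count_leq_iota (k n : nat) : count (leq k) (iota 0 n) = n - k.
Proof.
elim: n => // n IHn; rewrite -addn1 iotaD count_cat IHn /= add0n.
by case: leqP; lia.
Qed.

Lemma lt_wf_ind d (P : finPOrderType d) (Q : P -> Prop) :
  (forall c, (forall q, q < c -> Q q) -> Q c) -> forall c, Q c.
Proof.
move=> IH c; have [n] := ubnP #|[set q : P | q < c]|.
elim: n c => // n IHn c; rewrite ltnS => below_c.
apply: IH => q qc; apply: IHn; apply: leq_trans below_c; apply: proper_card.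
apply/properP; split; last by exists q; rewrite !inE ?ltxx.
by apply/subsetP => y; rewrite !inE => /lt_trans; apply.
Qed.

Section Chains.
Variable T : eqType.
Implicit Types (s : seq T) (m : monomial T).

Lemma chain_in_filter (a : pred T) s m :
  chain_in s m -> chain_in (filter a s) m.
Proof.
move=> sm p; apply: leq_trans (sm p).
by rewrite /chain_mono count_filter; apply: sub_count => y /andP[].
Qed.

Lemma chain_in_cat_nseq s (c : T) k m :
  chain_in s m -> c \notin s -> (k <= m c)%N -> chain_in (s ++ nseq k c) m.
Proof.
move=> sm cs km p; rewrite /chain_mono count_cat count_nseq /=.
have [<-|_] := eqVneq c p; first by rewrite (count_memPn cs) mul1n.
by rewrite mul0n addn0; apply: sm.
Qed.

End Chains.

Section BChains.
Variables (d : Order.disp_t) (P : porderType d).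
Implicit Types (b c : P) (s : seq P).

Lemma bchainE b s : bchain b s <-> sorted <=%O s /\ all (<= b) s.
Proof.
split=> [[ss lb]|[ss sb]]; split=> //.
  apply/allP => x xs; apply: le_trans lb; move: ss xs.
  case/lastP: s => // t c; rewrite last_rcons -cats1 le_sorted_pairwise.
  rewrite pairwise_cat mem_cat => /and3P[/allrelP tc _ _] /orP[xt|].
    exact: tc (mem_head _ _).
  by rewrite inE => /eqP ->.
by have := mem_last b s; rewrite in_cons => /orP[/eqP ->|/(allP sb)].
Qed.

Lemma bchain_last b s : sorted <=%O s -> bchain (last b s) s.
Proof. by case: s => [|x s] ss; split. Qed.

Lemma bchain_cat_nseq c s k :
  sorted <=%O s -> all (< c) s -> bchain c (s ++ nseq k c).
Proof.
move=> ss sc; apply/bchainE; split.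
  rewrite le_sorted_pairwise pairwise_cat -le_sorted_pairwise ss /=.
  apply/andP; split.
    apply/allrelP => x y /(allP sc) xc; rewrite mem_nseq => /andP[_ /eqP ->].
    exact: ltW.
  by elim: k => //= k ->; rewrite andbT all_nseq lexx orbT.
rewrite all_cat all_nseq; apply/andP; split; first by apply: sub_all sc => x /ltW.
by apply/orP; right; exact: lexx.
Qed.

End BChains.

Section AscentMonomial.
Variables (d : Order.disp_t) (P : finPOrderType d) (phi : P -> nat).
Hypothesis phi_isotone : isotone phi.

Definition max_below (c : P) : nat := \max_(q | q < c) phi q.

Lemma ascent_monoE c : ascent_mono phi c = phi c - max_below c.
Proof.
rewrite /ascent_mono -count_leq_iota; apply: eq_in_count => i.
rewrite mem_iota add0n /ascent /= => ->; rewrite andbT.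
apply/forallP/bigmax_leqP => [le_i q qc|le_i q]; first exact: implyP (le_i q) qc.
by apply/implyP; apply: le_i.
Qed.

Lemma max_below_le c : (max_below c <= phi c)%N.
Proof. by apply/bigmax_leqP => q /ltW/phi_isotone. Qed.

Lemma size_bchain_le c s :
  bchain c s -> chain_in s (ascent_mono phi) -> (size s <= phi c)%N.
Proof.
elim/lt_wf_ind: c s => c IHc s sc s_in.
have /bchainE[ss s_le_c] := sc.
set t := filter (predC1 c) s.
have size_s : size s = (size t + count_mem c s)%N.
  by rewrite size_filter -(count_predC (pred1 c)) addnC.
have count_c : (count_mem c s <= phi c - max_below c)%N.
  by rewrite -ascent_monoE; apply: s_in.
have [t0|t_neq0] := eqVneq t [::].
  by rewrite size_s t0 (leq_trans count_c) ?leq_subr.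
set c' := last c t.
have c'_lt_c : c' < c.
  have : c' \in t by rewrite /c'; case: (t) t_neq0 => // x t' _ /=; apply: mem_last.
  rewrite mem_filter => /andP[/= c'_neq_c /(allP s_le_c) c'_le_c].
  by rewrite lt_neqAle c'_neq_c.
have size_t : (size t <= phi c')%N.
  apply: IHc c'_lt_c _ (bchain_last c (sorted_filter le_trans _ ss)) _.
  exact: chain_in_filter.
have c'_le_max : (phi c' <= max_below c)%N by apply: leq_bigmax_cond.
rewrite size_s; apply: leq_trans (leq_add size_t count_c) _.
have := phi_isotone (ltW c'_lt_c); lia.
Qed.

Lemma exists_bchain c :
  exists s, [/\ bchain c s, chain_in s (ascent_mono phi) & size s = phi c].
Proof.
elim/lt_wf_ind: c => c IHc.
have [s [ss s_lt_c s_in size_s]] : exists s, [/\ sorted <=%O s, all (< c) s,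
    chain_in s (ascent_mono phi) & size s = max_below c].
  case: (pickP [pred q | q < c]) => [q0 q0c | no_q].
    rewrite /max_below (bigop.bigmax_eq_arg q0) //.
    case: arg_maxnP => //= q qc _.
    have [s [sq s_in size_s]] := IHc q qc.
    have /bchainE[ss s_le_q] := sq.
    exists s; split=> //; apply: sub_all s_le_q => x /le_lt_trans; exact.
  by exists [::]; split=> //; rewrite /max_below big_pred0.
exists (s ++ nseq (ascent_mono phi c) c); split.
- exact: bchain_cat_nseq.
- by apply: chain_in_cat_nseq => //; apply/negP => /(allP s_lt_c) /=; rewrite ltxx.
- by rewrite size_cat size_nseq size_s ascent_monoE subnKC ?max_below_le.
Qed.

End AscentMonomial.

Theorem lemma3p9 (d : Order.disp_t) (P : finPOrderType d) (phi : P -> nat)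
    (Hphi : isotone phi) (b : P) :
  let m := ascent_mono phi in
  (exists s : seq P, [/\ bchain b s, chain_in s m & size s = phi b]) /\
  (forall s : seq P, bchain b s -> chain_in s m -> (size s <= phi b)%N).
Proof.
split; first exact: exists_bchain.
by move=> s; apply: size_bchain_le.
Qed.
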